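(* Let $n\ge 2$ and let $G$ be a graph on $2n+1$ vertices with at least $n^2+n$ edges that contains no two distinct vertices of the same degree joined by a path of length three. Let $\beta$ be the largest integer such that $G$ contains two distinct vertices of degree $\beta$, and let $u,v$ be two distinct vertices with $d(u)=d(v)=\beta$. Let $\mathbf{1}_{uv}=1$ if $uv\in E(G)$ and $\mathbf{1}_{uv}=0$ otherwise, and set $c=\beta-n-\mathbf{1}_{uv}$. If $c\ge 1$, then \[ e(\overline{G})\ge n^2+c^2-c-\mathbf{1}_{uv}, \] where $e(\overline{G})$ is the number of edges of the complement graph $\overline{G}$.
   Context: A path of length three joining vertices $a$ and $b$ is a path $a\,x\,y\,b$ with four distinct vertices and three edges. $\overline{G}$ denotes the complement of $G$. Graphs are finite and simple. *)

From mathcomp Require Import all_boot.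
Set Implicit Arguments. Unset Strict Implicit. Unset Printing Implicit Defensive.

Section Graph.
Variable T : finType.
Variable e : rel T.

Definition simple_graph : Prop := symmetric e /\ irreflexive e.

Definition deg (x : T) : nat := #|[set y | e x y]|.

Definition nedges : nat :=
  #|[set A : {set T} | [exists x, exists y, [&& x != y, e x y & A == [set x; y]]]]|.

Definition nedges_compl : nat :=
  #|[set A : {set T} | [exists x, exists y, [&& x != y, ~~ e x y & A == [set x; y]]]]|.

Definition path3 (a b : T) : Prop :=
  exists x y : T, [/\ uniq [:: a; x; y; b], e a x, e x y & e y b].

Definition ind (u v : T) : nat := if e u v then 1 else 0.
End Graph.

(* Let A = N(u) - v, B = N(v) - u, C = A :&: B, and let W be the vertices
   outside A, B, u, v.  The paths u x z v rule out edges between A and B, so a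
   vertex of C is adjacent only to u, v and to W, and vertices of C with equally
   many W-neighbours have equal degrees.  If u ~ v, the paths x u v y force the
   W-degrees on C to be distinct, contradicting |C| >= |W| + 3 by pigeonhole.
   Otherwise the paths x a b y through W give
   2 * sum_C d_W + sum_W d_W <= 2 |C| |W|: take D maximal among W-degrees shared
   by two vertices x, y of C; a W-neighbour of x has no W-neighbour in common
   with y, and the W-degrees on C above D are pairwise distinct.  Bounding the
   degrees in A :\: B, B :\: A and W by their possible neighbourhoods and
   counting non-edges by the handshake lemma yields the bound. *)

From mathcomp Require Import all_boot zify.
Set Implicit Arguments. Unset Strict Implicit. Unset Printing Implicit Defensive.

Section Counting.
Variable T : finType.

Lemma cardsU_disjoint (A B : {set T}) :
  (forall x, x \in A -> x \in B -> False) -> #|A :|: B| = #|A| + #|B|.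
Proof.
move=> AB; rewrite -cardsUI (_ : A :&: B = set0) ?cards0 ?addn0 //.
by apply/setP => x; rewrite !inE; apply/negbTE/andP => -[/AB].
Qed.

Lemma pigeonhole (S : {set T}) (f : T -> nat) (b : nat) :
  (forall x, x \in S -> f x <= b) -> b.+1 < #|S| ->
  exists x y, [/\ x \in S, y \in S, x != y & f x = f y].
Proof.
move=> le_fb ltS.
have [/exists_inP[x xS /exists_inP[y yS /andP[xy /eqP fxy]]]|noColl] :=
  boolP [exists x in S, exists y in S, (x != y) && (f x == f y)].
  by exists x, y.
pose g x : 'I_b.+1 := inord (f x).
have g_inj : {in S &, injective g}.
  move=> x y xS yS /(congr1 (@nat_of_ord _)); rewrite !inordK ?ltnS ?le_fb //.
  move=> fxy; apply/eqP; apply: contraNT noColl => xy.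
  apply/exists_inP; exists x => //; apply/exists_inP; exists y => //.
  by rewrite xy fxy eqxx.
by have := @leq_card_in _ _ g (mem S) g_inj; rewrite card_ord leqNgt ltS.
Qed.

Lemma sum_injective_le (S : {set T}) (f : T -> nat) (t : nat) :
  {in S &, injective f} -> (forall x, x \in S -> f x <= t) ->
  2 * \sum_(x in S) f x <= t * t.+1.
Proof.
move=> f_inj le_ft.
pose g x : 'I_t.+1 := inord (f x).
have gE x : x \in S -> g x = f x :> nat by move=> xS; rewrite inordK ?ltnS ?le_ft.
have g_inj : {in S &, injective g}.
  by move=> x y xS yS /(congr1 (@nat_of_ord _)); rewrite !gE //; apply: f_inj.
rewrite (eq_bigr (fun x => nat_of_ord (g x))) => [|x /gE //].
rewrite -(big_imset (@nat_of_ord _) g_inj) /=.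
have le_sum : \sum_(k in g @: S) (k : nat) <= \sum_(k < t.+1) k.
  by rewrite [X in _ <= X](bigID (mem (g @: S))) leq_addr.
apply: (leq_trans (leq_mul (leqnn 2) le_sum)).
by rewrite -(big_mkord xpredT (fun k => k)) bin2_sum -mul_bin_diag bin1 mulnC.
Qed.

Lemma set2_eqE (a b x y : T) :
  a != b -> ([set a; b] == [set x; y]) = ((a, b) \in [set (x, y); (y, x)]).
Proof.
move=> ab; rewrite !inE; apply/eqP/idP => [E|/orP[] /eqP[-> ->] //]; last exact: setUC.
have : a \in [set x; y] by rewrite -E set21.
have : b \in [set x; y] by rewrite -E set22.
by rewrite !inE => /orP[]/eqP ea /orP[]/eqP eb; rewrite ea eb ?eqxx ?orbT in ab *.
Qed.

Lemma handshake (r : rel T) : symmetric r ->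
  2 * #|[set A : {set T} | [exists x, exists y, [&& x != y, r x y & A == [set x; y]]]]|
  = \sum_x #|[set y | (x != y) && r x y]|.
Proof.
move=> r_sym; set E := [set A : {set T} | _].
have -> : \sum_x #|[set y | (x != y) && r x y]|
          = \sum_(p : T * T | (p.1 != p.2) && r p.1 p.2) 1.
  rewrite -(pair_big_dep xpredT (fun x y => (x != y) && r x y) (fun _ _ => 1)).
  apply: eq_bigr => x _.
  by rewrite -sum1_card; apply: eq_bigl => y; rewrite inE.
rewrite (partition_big (fun p : T * T => [set p.1; p.2]) (mem E)); last first.
  move=> [x y] /= /andP[xy rxy]; rewrite inE.
  by apply/existsP; exists x; apply/existsP; exists y; rewrite xy rxy eqxx.
rewrite mulnC -sum_nat_const; apply: eq_bigr => S.
rewrite inE => /existsP[x /existsP[y /and3P[xy rxy /eqP->]]].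
rewrite (eq_bigl (mem [set (x, y); (y, x)])) => [|[a b] /=].
  by rewrite sum1_card cards2 (_ : (x, y) != (y, x)) //; apply: contra xy => /eqP[->].
case: (eqVneq a b) => [->|ab] /=.
  apply/esym/negbTE; rewrite !inE !xpair_eqE.
  by apply: contra xy => /orP[]/andP[/eqP<- /eqP<-].
rewrite set2_eqE // andbC; case: (boolP (_ \in _)) => //=.
by rewrite !inE => /orP[]/eqP[-> ->]; rewrite // r_sym.
Qed.
End Counting.

Section Graph.
Variables (T : finType) (e : rel T).
Hypotheses (e_sym : symmetric e) (e_irr : irreflexive e).

Definition deg_in (X : {set T}) (x : T) : nat := #|[set y | e x y] :&: X|.

Lemma card_nbrs_but p q : #|[set y | e p y & y != q]| + ind e p q = deg e p.
Proof.
have -> : [set y | e p y & y != q] = [set y | e p y] :\ q.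
  by apply/setP => y; rewrite !inE andbC.
by rewrite /deg (cardsD1 q [set y | e p y]) inE /ind addnC; case: (e p q).
Qed.

Lemma edge_neq x y : e x y -> x != y.
Proof. by apply: contraTneq => ->; rewrite e_irr. Qed.

Lemma deg_in_le (X : {set T}) x : deg_in X x <= #|X|.
Proof. exact/subset_leq_card/subsetIr. Qed.

Lemma deg_in_lt (X : {set T}) x : x \in X -> deg_in X x < #|X|.
Proof.
move=> xX; apply/proper_card/properP; split; first exact: subsetIr.
by exists x; rewrite // !inE e_irr.
Qed.

Lemma deg_inE (X : {set T}) x : deg_in X x = \sum_(y in X) e x y.
Proof.
rewrite /deg_in -sum1_card big_mkcond /= [RHS]big_mkcond; apply: eq_bigr => y _.
by rewrite !inE; case: (y \in X); case: (e x y).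
Qed.

Lemma sum_deg_in_sym (X Y : {set T}) :
  \sum_(x in X) deg_in Y x = \sum_(y in Y) deg_in X y.
Proof.
under eq_bigr do rewrite deg_inE; rewrite exchange_big /=.
by apply: eq_bigr => y _; rewrite deg_inE; apply: eq_bigr => x _; rewrite e_sym.
Qed.

Lemma nedges_compl_deg_sum : 2 * nedges_compl e + \sum_x deg e x = #|T| * #|T|.-1.
Proof.
have ne_sym : symmetric (fun x y => ~~ e x y) by move=> x y; rewrite e_sym.
rewrite /nedges_compl (handshake ne_sym) -big_split /= -{1}[#|T|]sum1_card.
rewrite big_distrl /=; apply: eq_bigr => x _; rewrite mul1n.
have -> : [set y | (x != y) && ~~ e x y] = ~: (x |: [set y | e x y]).
  by apply/setP => y; rewrite !inE negb_or eq_sym.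
have := cardsC (x |: [set y | e x y]); rewrite cardsU1 inE e_irr /deg /=; lia.
Qed.

Section EqualDegreePaths.
Variables C W : {set T}.
Hypothesis no_path : forall x y a b, x \in C -> y \in C -> x != y ->
  deg_in W x = deg_in W y -> a \in W -> b \in W -> e x a -> e a b -> e b y -> False.

Lemma deg_in_adj_le x y a : x \in C -> y \in C -> x != y ->
  deg_in W x = deg_in W y -> a \in W -> e x a -> deg_in W a + deg_in W y <= #|W|.
Proof.
move=> xC yC xy dxy aW xa; rewrite /deg_in -cardsUI (_ : _ :&: (_ :&: _) = set0).
  by rewrite cards0 addn0 subset_leq_card // subUset !subsetIr.
apply/setP => b; rewrite !inE; apply/negbTE/negP => /andP[/andP[ab bW] /andP[yb _]].
by apply: (no_path xC yC xy dxy aW bW xa ab); rewrite e_sym.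
Qed.

Lemma sum_deg_in_W_le x y D : x \in C -> y \in C -> x != y ->
  deg_in W x = D -> deg_in W y = D ->
  \sum_(a in W) deg_in W a <= D * (#|W| - D) + (#|W| - D) * #|W|.-1.
Proof.
move=> xC yC xy dx dy; rewrite (bigID (e x)) /=; apply: leq_add.
  apply: (@leq_trans (\sum_(a in W | e x a) (#|W| - D))).
    apply: leq_sum => a /andP[aW xa].
    have := deg_in_adj_le xC yC xy (etrans dx (esym dy)) aW xa; lia.
  rewrite sum_nat_cond_const (_ : #|_| = D) // -dx.
  by apply: eq_card => a; rewrite !inE andbC.
apply: (@leq_trans (\sum_(a in W | ~~ e x a) #|W|.-1)).
  apply: leq_sum => a /andP[aW _]; have := deg_in_lt aW; lia.
rewrite sum_nat_cond_const (_ : #|_| = #|W| - D) // -dx /deg_in.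
rewrite -(cardsID [set y | e x y] W) setIC addKn.
by apply: eq_card => a; rewrite !inE andbC.
Qed.

Lemma sum_deg_in_C_le D :
    (forall x y, x \in C -> y \in C -> x != y -> deg_in W x = deg_in W y ->
       deg_in W x <= D) ->
  2 * \sum_(x in C) deg_in W x <= 2 * #|C| * D + (#|W| - D) * (#|W| - D).+1.
Proof.
move=> maxD; set f := deg_in W; set S := C :&: [set x | D < f x].
have split_sum : \sum_(x in C) f x <= #|C| * D + \sum_(x in S) (f x - D).
  apply: (@leq_trans (\sum_(x in C) (D + (f x - D)))); first by apply: leq_sum; lia.
  rewrite big_split sum_nat_const (big_setID [set x | D < f x]) /=.
  rewrite [X in _ + (_ + X)]big1 ?addn0 // => x; rewrite !inE -leqNgt.
  by case/andP => le_fD _; apply/eqP; rewrite subn_eq0.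
have inj : {in S &, injective (fun x => f x - D)}.
  move=> x y /[!inE] /andP[xC ltx] /andP[yC lty] fxy.
  have fE : f x = f y by lia.
  by case: (eqVneq x y) => // xy; have := maxD x y xC yC xy fE; rewrite -/f; lia.
have := sum_injective_le inj (t := #|W| - D) (fun x _ => leq_sub2r D (deg_in_le W x)).
lia.
Qed.

Lemma sum_deg_in_le : #|W| + 2 <= #|C| ->
  2 * \sum_(x in C) deg_in W x + \sum_(a in W) deg_in W a <= 2 * #|C| * #|W|.
Proof.
move=> le_WC.
pose shared k :=
  [exists x in C, exists y in C, [&& x != y, deg_in W x == k & deg_in W y == k]].
have shared_ex : exists k, shared k.
  have lt_WC : #|W|.+1 < #|C| by rewrite -addn2.
  have [x [y [xC yC xy dxy]]] := pigeonhole (fun x _ => deg_in_le W x) lt_WC.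
  by exists (deg_in W x); apply/exists_inP; exists x => //; apply/exists_inP; exists y;
    rewrite // xy dxy eqxx.
have shared_le k : shared k -> k <= #|W|.
  by case/exists_inP => x _ /exists_inP[y _ /and3P[_ /eqP<- _]]; apply: deg_in_le.
case: (ex_maxnP shared_ex shared_le) => D.
case/exists_inP => x xC /exists_inP[y yC /and3P[xy /eqP dx /eqP dy]] maxD.
have sum_W := sum_deg_in_W_le xC yC xy dx dy.
have sum_C : 2 * \sum_(z in C) deg_in W z <= 2 * #|C| * D + (#|W| - D) * (#|W| - D).+1.
  apply: sum_deg_in_C_le => x' y' x'C y'C x'y' dx'y'; apply: maxD.
  apply/exists_inP; exists x' => //; apply/exists_inP; exists y' => //.
  by rewrite x'y' dx'y' eqxx.
have [t W_E] : exists t, #|W| = D + t.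
  by exists (#|W| - D); rewrite subnKC // -dx deg_in_le.
rewrite W_E addKn in sum_W sum_C le_WC *; nia.
Qed.
End EqualDegreePaths.

Section EqualDegreePair.
Hypothesis no_path3 : forall a x y b, deg e a = deg e b -> uniq [:: a; x; y; b] ->
  e a x -> e x y -> e y b -> False.

Lemma nbrs_no_edge p q x z : p != q -> deg e p = deg e q ->
  x \in [set y | e p y & y != q] -> z \in [set y | e q y & y != p] -> ~~ e x z.
Proof.
rewrite !inE => pq dpq /andP[px xq] /andP[qz zp]; apply/negP => xz.
apply: (no_path3 dpq _ px xz); last by rewrite e_sym.
rewrite /= !inE !negb_or pq xq (edge_neq px) (edge_neq xz) eq_sym zp /=.
by rewrite eq_sym (edge_neq qz).
Qed.

Lemma deg_private_le p q x : p != q -> deg e p = deg e q ->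
    x \in ([set y | e p y & y != q]) :\: ([set y | e q y & y != p]) ->
  deg e x + #|[set y | e q y & y != p]| + 2 <= #|T|.
Proof.
move=> pq dpq /[dup] /setDP[xA _]; rewrite !inE => /andP[/nandP xB /andP[px xq]].
have qx : ~~ e q x by case: xB => [//|/negPn/eqP xp]; rewrite xp e_irr in px.
set B := [set y | e q y & y != p].
have B_xq z : z \in B -> z \in [set x; q] -> False.
  by rewrite !inE => /andP[qz _] /orP[]/eqP zE; rewrite zE ?e_irr ?(negbTE qx) in qz.
have N_Bxq z : e x z -> z \in B :|: [set x; q] -> False.
  move=> xz /setUP[zB | /set2P[] zE].
  + by have /negP := nbrs_no_edge pq dpq xA zB.
  + by rewrite zE e_irr in xz.
  + by rewrite zE e_sym (negbTE qx) in xz.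
have := max_card ([set y | e x y] :|: (B :|: [set x; q])).
rewrite (cardsU_disjoint (A := [set y | e x y])) => [|z]; last first.
  by rewrite inE; apply: N_Bxq.
by rewrite (cardsU_disjoint B_xq) cards2 xq /deg addnA.
Qed.

Variables u v : T.
Hypothesis uv : u != v.

Local Notation A := ([set y | e u y & y != v]).
Local Notation B := ([set y | e v y & y != u]).
Local Notation C := (A :&: B).
Local Notation W := (~: (A :|: B :|: [set u; v])).

Lemma card_rest : #|W| + #|A| + #|B| + 2 = #|T| + #|C|.
Proof.
have AB_uv z : z \in A :|: B -> z \in [set u; v] -> False.
  by rewrite !inE => /orP[]/andP[z1 z2] /orP[]/eqP zE; subst z;
    rewrite ?eqxx ?e_irr in z1 z2.
have := cardsC (A :|: B :|: [set u; v]).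
rewrite (cardsU_disjoint AB_uv) cards2 uv; have := cardsUI A B; lia.
Qed.

Lemma common_rest_neq x y : x \in C -> y \in W -> x != y.
Proof.
move=> xC; apply: contraTneq => <-; rewrite in_setC negbK !in_setU.
by move: xC; rewrite in_setI => /andP[->].
Qed.

Lemma sum_over_parts (F : T -> nat) :
  \sum_x F x = F u + F v + \sum_(x in C) F x + \sum_(x in A :\: B) F x
                + \sum_(x in B :\: A) F x + \sum_(x in W) F x.
Proof.
rewrite (bigID (mem W)) /= addnC (eq_bigl (mem (A :|: B :|: [set u; v]))); last first.
  by move=> x; rewrite /= in_setC negbK.
have uv_rest : (A :|: B :|: [set u; v]) :\: (A :|: B) = [set u; v].
  rewrite setDUl setDv set0U; apply/setP => z; rewrite in_setD.
  by case/boolP: (z \in [set u; v]) => [/set2P[]->|]; rewrite ?andbF //;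
    rewrite !inE ?e_irr ?eqxx ?andbF.
rewrite (big_setID (A :|: B)) setUK uv_rest.
rewrite (@big_setID _ _ _ _ (A :|: B) A) setUK setDUl setDv set0U.
rewrite (@big_setID _ _ _ _ A B) big_setU1 ?big_set1 ?inE //=; lia.
Qed.

Lemma deg_rest_le x : x \in W ->
  deg e x <= deg_in C x + #|A :\: B| + #|B :\: A| + deg_in W x.
Proof.
move=> xW; move: (xW); rewrite in_setC !in_setU !in_set1 !negb_or.
case/andP => /andP[xA xB] /andP[xu xv].
have ux : ~~ e u x by move: xA; rewrite !inE xv andbT.
have vx : ~~ e v x by move: xB; rewrite !inE xu andbT.
have nbrs_sub : [set y | e x y] \subset
    ([set y | e x y] :&: C) :|: (A :\: B) :|: (B :\: A) :|: ([set y | e x y] :&: W).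
  apply/subsetP => y; rewrite inE => xy.
  rewrite !in_setU !in_setI !in_setD [y \in [set _ | e x _]]inE xy /=.
  case yA: (y \in A); case yB: (y \in B) => //=.
  rewrite in_setC !in_setU yA yB !in_set1 /=.
  by apply/negP => /orP[]/eqP yE; [move: ux | move: vx]; rewrite -yE e_sym xy.
have := subset_leq_card nbrs_sub.
have := (leq_card_setU ([set y | e x y] :&: C) (A :\: B)).1.
have := (leq_card_setU ([set y | e x y] :&: C :|: (A :\: B)) (B :\: A)).1.
have := (leq_card_setU ([set y | e x y] :&: C :|: (A :\: B) :|: (B :\: A))
                        ([set y | e x y] :&: W)).1.
rewrite /deg /deg_in; lia.
Qed.

Hypothesis duv : deg e u = deg e v.

Lemma deg_common x : x \in C -> deg e x = deg_in W x + 2.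
Proof.
rewrite in_setI => /andP[xA xB].
rewrite /deg /deg_in -(cardsID W [set y | e x y]).
rewrite (_ : _ :\: W = [set u; v]) ?cards2 ?uv //.
apply/setP => y; rewrite in_setD in_setC negbK !in_setU !in_set1.
rewrite [y \in [set _ | e x _]]inE.
apply/idP/idP => [/andP[yABuv xy]|/orP[]/eqP->].
- case/orP: yABuv => [/orP[yA|yB]|//].
    have vu : v != u by rewrite eq_sym.
    by have /negP := nbrs_no_edge vu (esym duv) xB yA.
  by have /negP := nbrs_no_edge uv duv xA yB.
- by rewrite eqxx orbT e_sym; move: xA; rewrite !inE => /andP[].
- by rewrite eqxx !orbT e_sym; move: xB; rewrite !inE => /andP[].
Qed.

Lemma card_common_le_adj : e u v -> #|C| <= #|W|.+1.
Proof.
move=> e_uv; rewrite leqNgt; apply/negP.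
move=> /(pigeonhole (fun x _ => deg_in_le W x)) [x [y [xC yC xy dxy]]].
move: (xC) (yC); rewrite !in_setI !inE => /andP[/andP[ux xv] _] /andP[_ /andP[vy yu]].
apply: (no_path3 (a := x) (x := u) (y := v) (b := y) _ _ _ e_uv vy).
- by rewrite !deg_common // dxy.
- rewrite /= !inE !negb_or xv xy uv eq_sym (edge_neq ux) eq_sym yu.
  by rewrite (edge_neq vy).
- by rewrite e_sym.
Qed.

Lemma card_nbrs_eq : #|A| = #|B|.
Proof.
have := card_nbrs_but u v; have := card_nbrs_but v u.
rewrite /ind (e_sym v u) duv; lia.
Qed.

Lemma sum_deg_le : \sum_x deg e x <= 2 * deg e u + 2 * #|C|
  + 2 * (#|A| - #|C|) * (#|T| - #|A| - 2) + 2 * #|W| * (#|A| - #|C|)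
  + (2 * \sum_(x in C) deg_in W x + \sum_(a in W) deg_in W a).
Proof.
have vu : v != u by rewrite eq_sym.
have card_AB : #|A :\: B| = #|A| - #|C| by rewrite cardsD.
have card_BA : #|B :\: A| = #|A| - #|C| by rewrite cardsD setIC card_nbrs_eq.
have sum_C : \sum_(x in C) deg e x = \sum_(x in C) deg_in W x + 2 * #|C|.
  by rewrite (eq_bigr _ deg_common) big_split sum_nat_const mulnC.
have sum_AB : \sum_(x in A :\: B) deg e x <= (#|A| - #|C|) * (#|T| - #|A| - 2).
  rewrite -card_AB -sum_nat_const; apply: leq_sum => x /(deg_private_le uv duv).
  by rewrite -card_nbrs_eq; lia.
have sum_BA : \sum_(x in B :\: A) deg e x <= (#|A| - #|C|) * (#|T| - #|A| - 2).
  rewrite -card_BA -sum_nat_const; apply: leq_sum => x.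
  by move/(deg_private_le vu (esym duv)); lia.
have sum_W : \sum_(x in W) deg e x <= \sum_(x in C) deg_in W x
    + #|W| * (2 * (#|A| - #|C|)) + \sum_(a in W) deg_in W a.
  rewrite -sum_deg_in_sym -sum_nat_const -!big_split /=.
  by apply: leq_sum => x /deg_rest_le; rewrite card_AB card_BA; lia.
rewrite sum_over_parts -duv; lia.
Qed.

Lemma sum_deg_in_common_le : #|W| + 2 <= #|C| ->
  2 * \sum_(x in C) deg_in W x + \sum_(a in W) deg_in W a <= 2 * #|C| * #|W|.
Proof.
apply: sum_deg_in_le => x y a b xC yC xy dxy aW bW xa ab b_y.
apply: (no_path3 (a := x) (x := a) (y := b) (b := y)) => //.
  by rewrite !deg_common // dxy.
rewrite /= !inE !negb_or xy (common_rest_neq xC aW) (common_rest_neq xC bW).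
rewrite (edge_neq ab) (eq_sym a) (common_rest_neq yC aW).
by rewrite (eq_sym b) (common_rest_neq yC bW).
Qed.

End EqualDegreePair.
End Graph.

Lemma compl_count_arith (N n b w i NC SD S : nat) :
  N = 2 * n + 1 -> n < b -> i <= b -> w + 2 * b + 2 = N + i ->
  2 * NC + SD = N * N.-1 ->
  SD <= 2 * b + 2 * i + 2 * (b - i) * (N - b - 2) + 2 * w * (b - i) + S ->
  S <= 2 * i * w ->
  n ^ 2 + (b - n) ^ 2 - (b - n) <= NC.
Proof.
move=> N_E lt_nb le_ib card_w compl deg_sum le_S.
have [c b_E] : exists c, b = n + c by exists (b - n); lia.
have [k n_E] : exists k, n = k + c + w + 1 by exists (n - c - w - 1); lia.
have i_E : i = w + 2 * c + 1 by lia.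
have -> : b - n = c by lia.
have bi : b - i = k by lia.
have Nb : N - b - 2 = k + w by lia.
have c2 : c <= c ^ 2 by rewrite expnS expn1 leq_pmulr; lia.
rewrite bi Nb i_E b_E in deg_sum; rewrite i_E in le_S.
rewrite N_E n_E /= in compl deg_sum *.
clear -compl deg_sum le_S c2; lia.
Qed.

Theorem lemma2p1 (T : finType) (e : rel T) (n : nat) (beta : nat) (u v : T) :
  simple_graph e ->
  2 <= n ->
  #|T| = 2 * n + 1 ->
  n ^ 2 + n <= nedges e ->
  (forall a b : T, a != b -> deg e a = deg e b -> ~ path3 e a b) ->
  (* beta is the largest integer such that two distinct vertices have degree beta *)
  (exists a b : T, [/\ a != b, deg e a = beta & deg e b = beta]) ->
  (forall (k : nat) (a b : T), a != b -> deg e a = k -> deg e b = k -> k <= beta) ->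
  u != v -> deg e u = beta -> deg e v = beta ->
  let c := beta - n - ind e u v in
  1 <= beta - n - ind e u v ->  (* c >= 1, i.e. beta >= n + 1_{uv} + 1 *)
  n ^ 2 + c ^ 2 - c - ind e u v <= nedges_compl e.
Proof.
move=> [e_sym e_irr] _ card_T _ no_path3 _ _ uv du dv c c_ge1; rewrite /c {c}.
have no_path a x y b : deg e a = deg e b -> uniq [:: a; x; y; b] ->
    e a x -> e x y -> e y b -> False.
  move=> dab axyb ax xy yb; apply: (no_path3 a b _ dab); last by exists x, y.
  by apply: contraTneq axyb => ->; rewrite /= !inE eqxx !orbT.
have duv : deg e u = deg e v by rewrite du dv.
have card_A := card_nbrs_but e u v.
have card_AB := card_nbrs_eq e_sym uv duv.
have card_W := card_rest e_irr uv.
have compl := nedges_compl_deg_sum e_sym e_irr.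
case: (boolP (e u v)) => [e_uv|ne_uv].
  have := card_common_le_adj e_sym e_irr no_path uv duv e_uv.
  rewrite /ind e_uv in card_A c_ge1; lia.
have ind0 : ind e u v = 0 by rewrite /ind (negbTE ne_uv).
rewrite ind0 !subn0 in card_A c_ge1 *.
set A := [set y | e u y & y != v] in card_A card_W card_AB *.
set B := [set y | e v y & y != u] in card_W card_AB *.
set W := ~: _ in card_W *.
have A_beta : #|A| = beta by rewrite -du -card_A addn0.
have le_WC : #|W| + 2 <= #|A :&: B| by lia.
have := sum_deg_le e_sym e_irr no_path uv duv.
have := sum_deg_in_common_le e_sym e_irr no_path uv duv le_WC.
rewrite -/A -/B -/W du A_beta => sum_in sum_deg.
apply: (compl_count_arith card_T _ _ _ compl sum_deg sum_in).
- by rewrite -subn_gt0.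
- by rewrite -A_beta subset_leq_card ?subsetIl.
- lia.
Qed.
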